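(* Let $n=p_1^{\alpha_1}p_2^{\alpha_2}\cdots p_r^{\alpha_r}$, where $r\geq 2$, $\alpha_1,\ldots,\alpha_r$ are positive integers and $p_1<p_2<\cdots<p_r$ are primes. For every $i\in\{1,2,\ldots,r-1\}$, in $\mathcal{P}(C_n)$, $$\deg(p_i^{\alpha_i})-\deg(p_r^{\alpha_r})>p_i^{\alpha_i-1}\left[(p_r-1)\,\phi\!\left(\frac{n}{p_i^{\alpha_i}p_r^{\alpha_r}}\right)-\frac{n}{p_i^{\alpha_i-1}p_r^{\alpha_r}}\right].$$
   Context: For a finite group $G$, the power graph $\mathcal{P}(G)$ is the simple undirected graph with vertex set $G$ in which two distinct vertices are adjacent if one is an integral power of the other. $C_n$ denotes the cyclic group of order $n$, identified with $\mathbb{Z}_n=\{0,1,\ldots,n-1\}$, so a positive divisor $d<n$ of $n$ is regarded as the element $d\in\mathbb{Z}_n$. $\deg(a)$ is the degree of vertex $a$ in $\mathcal{P}(C_n)$ and $\phi$ is Euler's totient function. *)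

From HB Require Import structures.
From mathcomp Require Import all_boot all_order all_algebra.
Set Implicit Arguments. Unset Strict Implicit. Unset Printing Implicit Defensive.

(* Power graph of the cyclic group C_n, identified with Z_n = {0,...,n-1}
   (vertices are the ordinals 'I_n).  The group is additive, so the
   "integral powers" of a are the multiples k*a mod n; it suffices to let k
   range over 0..n-1 since k*a mod n is n-periodic in k (negative powers are
   also among these multiples). *)
Definition is_power (n a b : nat) : bool :=
  [exists k : 'I_n, b == (k * a) %% n].

Definition pcn_adj (n a b : nat) : bool :=
  (a != b) && (is_power n a b || is_power n b a).

Definition pcn_deg (n a : nat) : nat :=
  #|[set b : 'I_n | pcn_adj n a (val b)]|.

(* Write m = P * M with P, M coprime, M > 1, and view P as an element of
   C_m = Z_m.  A vertex b is a power of P exactly when P divides b, and P is a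
   power of b exactly when b is coprime to M (then b is a unit modulo M and
   Euler's theorem produces the multiplier).  Counting the residues b < m in
   these two classes by inclusion-exclusion (M multiples of P, P * phi(M)
   residues coprime to M, phi(M) residues in both, and b = P itself excluded)
   gives  deg(P) = M + (P - 1) * phi(M) - 1.

   For n = p^a * q^b * N with primes p < q coprime to N we apply this twice,
   to P = p^a and to P = q^b; the difference of the two degrees minus the
   claimed lower bound is a polynomial expression that is positive because
   phi(N) <= N. *)
From HB Require Import structures.
From mathcomp Require Import all_boot all_order all_algebra.
From mathcomp Require Import cyclic zify.
Import GRing.Theory Num.Theory.

Lemma card_ord_pred n (f : pred nat) :
  #|[set b : 'I_n | f b]| = \sum_(0 <= b < n) f b.
Proof.
rewrite -sum1_card big_mkcond /= big_mkord; apply: eq_bigr => b _.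
by rewrite inE; case: (f b).
Qed.

(* Coprimality to M is M-periodic, so [0, k * M) holds k * phi(M) such b. *)
Lemma sum_coprime_periodic M k :
  \sum_(0 <= b < k * M) coprime b M = k * totient M.
Proof.
elim: k => [|k IHk]; first by rewrite mul0n big_geq.
rewrite mulSn addnC (big_cat_nat _ (leq_addr _ _)) //= IHk.
rewrite -{1}[k * M]add0n big_addn addKn totient_count_coprime mulSn addnC.
congr (_ + _); apply: eq_bigr => b _.
by rewrite -coprime_modl addnC modnMDl coprime_modl coprime_sym.
Qed.

Lemma sum_multiples P M (g : pred nat) : 0 < P ->
  \sum_(0 <= b < P * M) ((P %| b) && g b) = \sum_(0 <= c < M) g (P * c).
Proof.
move=> P_gt0; elim: M => [|M IHM]; first by rewrite muln0 !big_geq.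
rewrite mulnS addnC (big_cat_nat _ (leq_addr _ _)) //= IHM big_nat_recr //=.
congr (_ + _); rewrite big_ltn ?dvdn_mulr //=; last lia.
rewrite big1_seq ?addn0 // => b /andP[_]; rewrite mem_index_iota => /andP[lo hi].
have -> : b = P * M + (b - P * M) by lia.
rewrite dvdn_addr ?dvdn_mulr //.
by case: (boolP (P %| b - P * M)) => //= /dvdn_leq; lia.
Qed.

Lemma sum_point n a : a < n -> \sum_(0 <= b < n) (b == a) = 1.
Proof.
move=> a_lt_n; rewrite (eq_bigr (fun b => if b == a then 1 else 0)).
  rewrite -big_mkcond sum1_count /index_iota subn0.
  by rewrite count_uniq_mem ?iota_uniq // mem_iota /= a_lt_n.
by move=> b _; case: (b == a).
Qed.

Lemma is_power_of_divisor m P b : P %| m -> b < m -> is_power m P b = (P %| b).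
Proof.
move=> P_dvd_m b_lt_m; apply/existsP/idP.
  case=> k /eqP ->; rewrite /dvdn (modn_dvdm _ P_dvd_m) -/(dvdn _ _).
  exact: dvdn_mull.
have P_gt0 : 0 < P.
  by move: P_dvd_m; rewrite lt0n; apply: contraTN => /eqP ->; rewrite dvd0n; lia.
case/dvdnP=> c def_b.
have c_lt_m : c < m by move: b_lt_m; rewrite def_b; nia.
by exists (Ordinal c_lt_m); rewrite /= modn_small -?def_b.
Qed.

(* In C_(P*M) with P coprime to M, P is a power of b iff b is coprime to M:
   a common factor of b and M would divide P, and conversely
   b^(phi(M)-1) * P * b = P * b^phi(M) = P modulo P * M by Euler's theorem. *)
Lemma is_power_to_coprime_factor P M b : 1 < M -> coprime P M -> b < P * M ->
  is_power (P * M) b P = coprime b M.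
Proof.
move=> M_gt1 coPM b_lt_m; apply/existsP/idP.
  case=> k /eqP def_P.
  have gcd_dvd_P : gcdn b M %| P.
    rewrite def_P /dvdn (modn_dvdm _ (dvdn_mull _ (dvdn_gcdr b M))) -/(dvdn _ _).
    exact/dvdn_mull/dvdn_gcdl.
  have : gcdn b M %| gcdn P M by rewrite dvdn_gcd gcd_dvd_P dvdn_gcdr.
  by rewrite (eqP coPM) dvdn1.
move=> co_bM.
have phi_gt0 : 0 < totient M by rewrite totient_gt0; lia.
have k_lt_m : (b ^ (totient M).-1 * P) %% (P * M) < P * M.
  by rewrite ltn_mod; move: b_lt_m; lia.
exists (Ordinal k_lt_m); rewrite /= modnMml.
have -> : b ^ (totient M).-1 * P * b = P * b ^ totient M.
  by rewrite -[X in P * b ^ X](prednK phi_gt0) expnS; nia.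
rewrite -muln_modr (Euler_exp_totient co_bM) modn_small // muln1.
by move: b_lt_m; case: (P) => [|?]; nia.
Qed.

Lemma pcn_adj_coprime_factor P M b : 1 < M -> coprime P M -> b < P * M ->
  pcn_adj (P * M) P b = (b != P) && ((P %| b) || coprime b M).
Proof.
move=> M_gt1 coPM b_lt_m.
rewrite /pcn_adj is_power_of_divisor ?dvdn_mulr // is_power_to_coprime_factor //.
by rewrite eq_sym.
Qed.

Lemma pcn_deg_coprime_factor P M : 0 < P -> 1 < M -> coprime P M ->
  pcn_deg (P * M) P + totient M + 1 = M + P * totient M.
Proof.
move=> P_gt0 M_gt1 coPM.
have P_lt_m : P < P * M by nia.
have both : \sum_(0 <= b < P * M) ((P %| b) && coprime b M) = totient M.
  rewrite sum_multiples // -[RHS]mul1n -sum_coprime_periodic mul1n.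
  by apply: eq_bigr => c _; rewrite coprimeMl coPM.
have multiples : \sum_(0 <= b < P * M) ((P %| b) && true) = M.
  by rewrite sum_multiples // sum_nat_const_nat subn0 muln1.
have incl_excl : pcn_deg (P * M) P
      + \sum_(0 <= b < P * M) ((P %| b) && coprime b M)
      + \sum_(0 <= b < P * M) (b == P)
    = \sum_(0 <= b < P * M) ((P %| b) && true)
      + \sum_(0 <= b < P * M) coprime b M.
  rewrite /pcn_deg card_ord_pred -!big_split /=.
  apply: eq_big_nat => b /andP[_ b_lt_m].
  rewrite pcn_adj_coprime_factor //; case: (eqVneq b P) => [->|_] /=.
    by rewrite dvdnn; case: (coprime P M).
  by case: (P %| b); case: (coprime b M).
by rewrite both multiples sum_coprime_periodic sum_point in incl_excl.
Qed.

Lemma coprime_prime_powers p q a b : prime p -> prime q -> p != q ->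
  coprime (p ^ a) (q ^ b).
Proof.
move=> p_pr q_pr p_neq_q.
by apply/coprimeXl/coprimeXr; rewrite prime_coprime // dvdn_prime2.
Qed.

Lemma coprime_prodr (I : Type) (s : seq I) (P : pred I) (F : I -> nat) a :
  (forall j, P j -> coprime a (F j)) -> coprime a (\prod_(j <- s | P j) F j).
Proof.
move=> coF; apply: (big_ind (coprime a)) => //; first exact: coprimen1.
by move=> u v; rewrite coprimeMr => -> ->.
Qed.

(* phi(n) counts some of the residues 0 <= d < n. *)
Lemma totient_leq n : totient n <= n.
Proof.
rewrite totient_count_coprime -[X in _ <= X]subn0 -[X in _ <= X]muln1.
by rewrite -sum_nat_const_nat; apply: leq_sum => d _; case: (coprime n d).
Qed.

(* With P = p * x, Q = q * y, phi(P) = (p-1) x,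
   phi(Q) = (q-1) y and t = phi(N), the two degree formulas give
     deg P - deg Q - x ((q-1) t - p N)
       = y (N + (q-1)(N - t)) + t (q - p) x (y - 1),
   which is positive when p < q, y > 0, 0 < N and t <= N. *)
Lemma degree_gap_arith (p q x y N t dP dQ : nat) :
  0 < p -> p < q -> 0 < y -> 0 < N -> t <= N ->
  dP + q.-1 * y * t + 1 = q * y * N + p * x * (q.-1 * y * t) ->
  dQ + p.-1 * x * t + 1 = p * x * N + q * y * (p.-1 * x * t) ->
  (dP%:Z - dQ%:Z > x%:Z * ((q.-1 * t)%:Z - (p * N)%:Z))%R.
Proof.
case: p => // p _; case: q => // q /ltnSE p_le_q; case: y => // y _ N_gt0.
move=> /subnKC <-; move: p_le_q => /subnKC <- /= degP degQ.
nia.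
Qed.

Lemma pcn_deg_gap (p q a b N : nat) :
  prime p -> prime q -> p < q -> 0 < a -> 0 < b -> 0 < N ->
  coprime (p ^ a) N -> coprime (q ^ b) N ->
  let n := p ^ a * (q ^ b * N) in
  ((pcn_deg n (p ^ a))%:Z - (pcn_deg n (q ^ b))%:Z >
   (p ^ a.-1)%:Z *
     ((q.-1 * totient (n %/ (p ^ a * q ^ b)))%:Z
      - (n %/ (p ^ a.-1 * q ^ b))%:Z))%R.
Proof.
move=> p_pr q_pr p_lt_q a_gt0 b_gt0 N_gt0 coPN coQN; cbv zeta.
set n := p ^ a * (q ^ b * N).
have p_gt1 := prime_gt1 p_pr; have q_gt1 := prime_gt1 q_pr.
have coPQ : coprime (p ^ a) (q ^ b).
  by apply: coprime_prime_powers => //; rewrite neq_ltn p_lt_q.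
have P_def : p ^ a = p * p ^ a.-1 by rewrite -expnS prednK.
have Q_def : q ^ b = q * q ^ b.-1 by rewrite -expnS prednK.
have x_gt0 : 0 < p ^ a.-1 by rewrite expn_gt0; lia.
have y_gt0 : 0 < q ^ b.-1 by rewrite expn_gt0; lia.
have degP : pcn_deg n (p ^ a) + totient (q ^ b * N) + 1
            = q ^ b * N + p ^ a * totient (q ^ b * N).
  by apply: pcn_deg_coprime_factor; rewrite ?coprimeMr ?coPQ //; nia.
have degQ : pcn_deg n (q ^ b) + totient (p ^ a * N) + 1
            = p ^ a * N + q ^ b * totient (p ^ a * N).
  rewrite /n mulnCA; apply: pcn_deg_coprime_factor; [nia | nia |].
  by rewrite coprimeMr coprime_sym coPQ.
rewrite !totient_coprime // !totient_pfactor // in degP degQ.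
have -> : n %/ (p ^ a * q ^ b) = N by rewrite /n mulnA mulKn // muln_gt0; nia.
have -> : n %/ (p ^ a.-1 * q ^ b) = p * N.
  have -> : n = p ^ a.-1 * q ^ b * (p * N) by rewrite /n P_def; nia.
  by rewrite mulKn //; nia.
(* Protect the degrees so that unfolding p ^ a and q ^ b stays outside them. *)
move: degP degQ; set dP := pcn_deg n _; set dQ := pcn_deg n _.
rewrite P_def Q_def; apply: degree_gap_arith => //; [exact: prime_gt0 | exact: totient_leq].
Qed.

(* The primes are p 0 < ... < p (r-1); the exponents are alpha 0 .. alpha (r-1).
   Isolate the factors of index i and r-1 of n and apply pcn_deg_gap. *)
Theorem lemma2p3 (n r : nat) (p alpha : nat -> nat)
  (hr : 2 <= r)
  (hprime : forall j, j < r -> prime (p j))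
  (halpha : forall j, j < r -> 0 < alpha j)
  (hmono : forall j k, j < k -> k < r -> p j < p k)
  (hn : n = \prod_(j < r) p j ^ alpha j)
  (i : nat) (hi : i < r.-1) :
  let pi := p i ^ alpha i in
  let pr := p r.-1 ^ alpha r.-1 in
  ((pcn_deg n pi)%:Z - (pcn_deg n pr)%:Z >
   (p i ^ (alpha i).-1)%:Z *
     (((p r.-1).-1 * totient (n %/ (pi * pr)))%:Z
      - (n %/ (p i ^ (alpha i).-1 * pr))%:Z))%R.
Proof.
cbv zeta.
have i_lt_r : i < r by lia.
have last_lt_r : r.-1 < r by lia.
pose I := Ordinal i_lt_r; pose L := Ordinal last_lt_r.
have L_neq_I : L != I by rewrite -val_eqE /=; lia.
have p_neq : forall j k, j < r -> k < r -> j != k -> p j != p k.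
  move=> j k j_lt_r k_lt_r; case: ltngtP => // j_k _.
    by have := hmono _ _ j_k k_lt_r; lia.
  by have := hmono _ _ j_k j_lt_r; lia.
pose N := \prod_(j < r | (j != I) && (j != L)) p j ^ alpha j.
have def_n : n = p i ^ alpha i * (p r.-1 ^ alpha r.-1 * N).
  by rewrite hn (bigD1 I) //= (bigD1 L).
have coN : forall k : 'I_r, (k == I) || (k == L) -> coprime (p k ^ alpha k) N.
  move=> k k_IL; apply: coprime_prodr => j /andP[j_neq_I j_neq_L].
  apply: coprime_prime_powers; rewrite ?hprime // p_neq //.
  by apply: contraTneq k_IL => /val_inj ->; rewrite negb_or j_neq_I.
have N_gt0 : 0 < N.
  by apply: prodn_gt0 => j; rewrite expn_gt0 prime_gt0 ?hprime.
rewrite def_n; apply: pcn_deg_gap; rewrite ?hprime ?halpha ?hmono //.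
  by apply: (coN I); rewrite eqxx.
by apply: (coN L); rewrite eqxx orbT.
Qed.
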